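(* Let $L$ be a multisorted algebra in the positive quantifier-free signature satisfying axioms (1), (2), (3), and let $F$ be a prime filter of the lattice forming sort $n$ of $L$. Let $F_1,\dots,F_n$ be distinct symbols and $W=\{F_1,\dots,F_n\}$. Define $\varphi\colon L\to A(W)$ on each sort $k$ by $$\varphi(r)=\{\alpha^{\mathrm{tuple}}(F_1,\dots,F_n)\mid \alpha\colon k\to n \text{ a substitution with } \alpha(r)\in F\}.$$ Then $\varphi$ is a morphism of positive quantifier-free algebras.
   Context: Signature. There is a sort $n$ for each natural number $n\ge 0$. For every function $\alpha\colon\{1,\dots,n\}\to\{1,\dots,k\}$ there is a unary function symbol (''substitution'') $\alpha\colon n\to k$ (argument of sort $n$, value of sort $k$). For each sort there are constants $0,1$ and binary operations $\vee,\wedge$. This is the positive quantifier-free signature. If $\alpha\colon k\to n$, $\beta\colon n\to m$ are substitutions, $\beta\circ\alpha\colon k\to m$ is the substitution symbol of the composite function, while $\beta(\alpha(r))$ is composition inside an algebra. For a set $W$ and substitution $\alpha\colon\{1,\dots,n\}\to\{1,\dots,k\}$: $\alpha^{\mathrm{tuple}}\colon W^k\to W^n$, $\alpha^{\mathrm{tuple}}(x_1,\dots,x_k)=(x_{\alpha(1)},\dots,x_{\alpha(n)})$, and $\alpha^{\mathrm{relation}}(r)=\{\bar x\in W^k:\alpha^{\mathrm{tuple}}(\bar x)\in r\}$ for $r\subseteq W^n$. The positive quantifier-free algebra $A(W)$ interprets sort $n$ as $\mathcal P(W^n)$, $\alpha$ as $\alpha^{\mathrm{relation}}$, and $0,1,\vee,\wedge$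 as $\emptyset,W^n,\cup,\cap$. A morphism is a sort-preserving family of maps commuting with all operations. Axioms: (1) each sort is a bounded distributive lattice under $0,1,\vee,\wedge$; (2) every substitution preserves $0,1,\vee,\wedge$; (3) $(\beta\circ\alpha)(r)=\beta(\alpha(r))$ for all composable substitutions $\alpha\colon k\to n$, $\beta\colon n\to m$ and $r$ of sort $k$. A prime filter of a bounded distributive lattice is a proper, nonempty, upward-closed subset closed under $\wedge$ such that $x\vee y\in F$ implies $x\in F$ or $y\in F$. *)

From mathcomp Require Import all_boot.
Set Implicit Arguments. Unset Strict Implicit. Unset Printing Implicit Defensive.

(* Positive quantifier-free signature: sorts are natural numbers n >= 0.
   A substitution symbol alpha : n -> k is a function 'I_n -> 'I_k
   (i.e. {1..n} -> {1..k}); it sends sort n to sort k. *)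
Record pqf_alg := PQFAlg {
  car : nat -> Type;
  subst : forall n k : nat, ('I_n -> 'I_k) -> car n -> car k;
  zero : forall n, car n;
  one : forall n, car n;
  join : forall n, car n -> car n -> car n;
  meet : forall n, car n -> car n -> car n
}.
Arguments subst {_ n k} _ _.
Arguments zero {_} n.
Arguments one {_} n.
Arguments join {_ n} _ _.
Arguments meet {_ n} _ _.

Definition bdl_axioms (T : Type) (z o : T) (j m : T -> T -> T) : Prop :=
  [/\ (forall x y w, j x (j y w) = j (j x y) w),
      (forall x y w, m x (m y w) = m (m x y) w),
      (forall x y, j x y = j y x),
      (forall x y, m x y = m y x) &
   [/\ (forall x y, j x (m x y) = x),
       (forall x y, m x (j x y) = x),
       (forall x y w, m x (j y w) = j (m x y) (m x w)),
       (forall x, j x z = x) &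
       (forall x, m x o = x)]].

Definition pqf_axioms (L : pqf_alg) : Prop :=
  [/\ (forall n, bdl_axioms (@zero L n) (@one L n) (@join L n) (@meet L n)),
      (forall n k (a : 'I_n -> 'I_k),
                   [/\ subst a (@zero L n) = @zero L k,
                       subst a (@one L n) = @one L k,
                       (forall x y : car L n, subst a (join x y) = join (subst a x) (subst a y)) &
                       (forall x y : car L n, subst a (meet x y) = meet (subst a x) (subst a y))]) &
      (forall k n m (a : 'I_k -> 'I_n) (b : 'I_n -> 'I_m) (r : car L k),
                   subst (fun i => b (a i)) r = subst b (subst a r))].

Definition lat_le (L : pqf_alg) (n : nat) (x y : car L n) : Prop := meet x y = x.

Definition prime_filter (L : pqf_alg) (n : nat) (F : car L n -> Prop) : Prop :=
  [/\ (exists x, ~ F x),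
      (exists x, F x),
      (forall x y, F x -> lat_le x y -> F y),
      (forall x y, F x -> F y -> F (meet x y)) &
      (forall x y, F (join x y) -> F x \/ F y)].

(* The positive quantifier-free algebra A(W): sort n is P(W^n), tuples being
   functions 'I_n -> W, subsets being predicates. *)
Definition A_alg (W : Type) : pqf_alg :=
  @PQFAlg (fun n => ('I_n -> W) -> Prop)
    (fun n k (a : 'I_n -> 'I_k) (r : ('I_n -> W) -> Prop) =>
       fun x : 'I_k -> W => r (fun i => x (a i)))
    (fun n _ => False)
    (fun n _ => True)
    (fun n r s x => r x \/ s x)
    (fun n r s x => r x /\ s x).

Definition is_morphism (L M : pqf_alg) (f : forall n, car L n -> car M n) : Prop :=
  [/\ (forall n k (a : 'I_n -> 'I_k) (r : car L n), f k (subst a r) = subst a (f n r)),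
      (forall n, f n (@zero L n) = @zero M n),
      (forall n, f n (@one L n) = @one M n),
      (forall n (x y : car L n), f n (join x y) = join (f n x) (f n y)) &
      (forall n (x y : car L n), f n (meet x y) = meet (f n x) (f n y))].

Definition phi (L : pqf_alg) (n : nat) (F : car L n -> Prop) (W : Type)
  (Fs : 'I_n -> W) : forall k, car L k -> car (A_alg W) k :=
  fun k r => fun x : 'I_k -> W =>
    exists a : 'I_k -> 'I_n, x = (fun i => Fs (a i)) /\ F (subst a r).

(* A tuple over W = {F_1, ..., F_n} is the same thing as a substitution into n,
   so phi(r) is in effect the set of substitutions alpha with alpha(r) in F.
   Compatibility with substitutions is then axiom (3); phi(0) and phi(1) are
   empty and full because F is proper and nonempty; phi preserves joins
   because F is prime, and meets because F is a filter and the substitution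
   witnessing a tuple is unique. *)

From Stdlib Require Import FunctionalExtensionality PropExtensionality ClassicalEpsilon.
From Pilot Require Import Defs.
From mathcomp Require Import all_boot.

Set Implicit Arguments.
Unset Strict Implicit.

Lemma pred_ext (T : Type) (P Q : T -> Prop) : (forall x, P x <-> Q x) -> P = Q.
Proof.
by move=> PQ; apply: functional_extensionality => x; apply: propositional_extensionality.
Qed.

Section BoundedDistributiveLattice.

Variables (T : Type) (z o : T) (j m : T -> T -> T).
Hypothesis HT : bdl_axioms z o j m.

Lemma bdl_meetxx x : m x x = x.
Proof. by case: HT => _ _ _ _ [jm mj _ _ _]; rewrite -{2}(jm x x) mj. Qed.

Lemma bdl_meet0x x : m z x = z.
Proof. by case: HT => _ _ jC _ [_ mj _ j0 _]; have := mj z x; rewrite jC j0. Qed.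

Lemma bdl_meet_joinl x y : m x (j x y) = x.
Proof. by case: HT => _ _ _ _ [_ mj _ _ _]. Qed.

Lemma bdl_meet_joinr x y : m y (j x y) = y.
Proof. by case: HT => _ _ jC _ [_ mj _ _ _]; rewrite jC mj. Qed.

Lemma bdl_meetKl x y : m (m x y) x = m x y.
Proof. by case: HT => _ mA _ mC _; rewrite mC mA bdl_meetxx. Qed.

Lemma bdl_meetKr x y : m (m x y) y = m x y.
Proof. by case: HT => _ mA _ _ _; rewrite -mA bdl_meetxx. Qed.

End BoundedDistributiveLattice.

Section PrimeFilter.

Variables (L : pqf_alg) (n : nat) (F : car L n -> Prop).
Hypothesis Hlat : bdl_axioms (Defs.zero n) (Defs.one n) (@join L n) (@meet L n).
Hypothesis HF : prime_filter F.

Lemma prime_filter_zero : ~ F (Defs.zero n).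
Proof.
case: HF => [[x Fx] _ Fup _ _] F0; apply: Fx; apply: (Fup _ _ F0).
exact: bdl_meet0x Hlat x.
Qed.

Lemma prime_filter_one : F (Defs.one n).
Proof.
case: HF => [_ [x Fx] Fup _ _]; apply: (Fup _ _ Fx).
by case: Hlat => _ _ _ _ [_ _ _ _ meetx1]; exact: meetx1.
Qed.

Lemma prime_filter_join x y : F (join x y) <-> F x \/ F y.
Proof.
case: HF => [_ _ Fup _ Fprime]; split; first exact: Fprime.
case=> Fxy; apply: (Fup _ _ Fxy).
- exact: bdl_meet_joinl Hlat x y.
- exact: bdl_meet_joinr Hlat x y.
Qed.

Lemma prime_filter_meet x y : F (meet x y) <-> F x /\ F y.
Proof.
case: HF => [_ _ Fup Fmeet _]; split; last by case=> Fx Fy; exact: Fmeet.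
move=> Fxy; split; apply: (Fup _ _ Fxy).
- exact: bdl_meetKl Hlat x y.
- exact: bdl_meetKr Hlat x y.
Qed.

End PrimeFilter.

Section TuplesOverW.

Variables (W : Type) (n : nat) (Fs : 'I_n -> W).
Hypothesis Fs_inj : injective Fs.
Hypothesis Fs_surj : forall w : W, exists i, Fs i = w.

Lemma tuple_factor k (x : 'I_k -> W) : exists b : 'I_k -> 'I_n, x = (fun i => Fs (b i)).
Proof.
have [b Hb] := choice (fun i c => Fs c = x i) (fun i => Fs_surj (x i)).
by exists b; apply: functional_extensionality => i; rewrite Hb.
Qed.

Lemma tuple_factor_inj k (a b : 'I_k -> 'I_n) :
  (fun i => Fs (a i)) = (fun i => Fs (b i)) -> a = b.
Proof.
move=> Eab; apply: functional_extensionality => i.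
exact: Fs_inj (f_equal (fun x => x i) Eab).
Qed.

End TuplesOverW.

Section PhiMorphism.

Variables (L : pqf_alg) (n : nat) (F : car L n -> Prop).
Hypothesis HL : pqf_axioms L.
Hypothesis HF : prime_filter F.
Variables (W : Type) (Fs : 'I_n -> W).
Hypothesis Fs_inj : injective Fs.
Hypothesis Fs_surj : forall w : W, exists i, Fs i = w.

Let Hlat : bdl_axioms (Defs.zero n) (Defs.one n) (@join L n) (@meet L n).
Proof. by case: HL. Qed.

Lemma phi_subst k m (a : 'I_k -> 'I_m) (r : car L k) x :
  phi F Fs (subst a r) x <-> phi F Fs r (fun i => x (a i)).
Proof.
case: HL => _ _ subst_comp; split.
- case=> b [-> Fb]; exists (fun i => b (a i)); split => //.
  by rewrite subst_comp.
- case=> c [Exa Fc]; have [b Eb] := tuple_factor Fs_surj x.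
  exists b; split => //.
  have Ec : (fun i => b (a i)) = c by apply: (tuple_factor_inj Fs_inj); rewrite -Exa Eb.
  by rewrite -subst_comp Ec.
Qed.

Lemma phi_zero k x : ~ phi F Fs (Defs.zero k) x.
Proof.
case=> a [_ Fa]; apply: (prime_filter_zero Hlat HF).
by case: HL Fa => _ /(_ k n a) [-> _ _ _].
Qed.

Lemma phi_one k x : phi F Fs (Defs.one k) x.
Proof.
have [b Eb] := tuple_factor Fs_surj x; exists b; split => //.
by case: HL => _ /(_ k n b) [_ -> _ _] _; exact: prime_filter_one Hlat HF.
Qed.

Lemma phi_join k (r s : car L k) x :
  phi F Fs (join r s) x <-> phi F Fs r x \/ phi F Fs s x.
Proof.
have subst_join (a : 'I_k -> 'I_n) : subst a (join r s) = join (subst a r) (subst a s).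
  by case: HL => _ /(_ k n a) [].
split.
- case=> a [Ex]; rewrite subst_join => /(prime_filter_join Hlat HF).
  by case=> Fa; [left | right]; exists a.
- by case=> -[a [Ex Fa]]; exists a; split => //;
    rewrite subst_join; apply/(prime_filter_join Hlat HF); [left | right].
Qed.

Lemma phi_meet k (r s : car L k) x :
  phi F Fs (meet r s) x <-> phi F Fs r x /\ phi F Fs s x.
Proof.
have subst_meet (a : 'I_k -> 'I_n) : subst a (meet r s) = meet (subst a r) (subst a s).
  by case: HL => _ /(_ k n a) [].
split.
- case=> a [Ex]; rewrite subst_meet => /(prime_filter_meet Hlat HF) [Far Fas].
  by split; exists a.
- case=> -[a [Ea Fa]] [b [Eb Fb]].
  have Eab : a = b by apply: (tuple_factor_inj Fs_inj); rewrite -Ea -Eb.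
  subst b; exists a; split => //.
  by rewrite subst_meet; apply/(prime_filter_meet Hlat HF).
Qed.

End PhiMorphism.

Theorem lemma3p3 (L : pqf_alg) (HL : pqf_axioms L) (n : nat)
  (F : car L n -> Prop) (HF : prime_filter F)
  (W : Type) (Fs : 'I_n -> W) (Fs_inj : injective Fs)
  (Fs_surj : forall w : W, exists i, Fs i = w) :
  is_morphism (M := A_alg W) (phi F Fs).
Proof.
split=> [m k a r | k | k | k r s | k r s]; apply: pred_ext => x /=.
- exact: phi_subst.
- by split=> // /(phi_zero HL HF).
- by split=> // _; exact: phi_one.
- exact: phi_join.
- exact: phi_meet.
Qed.
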